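(* Let $F$ be a field, let $X$ be a topological space and let $X_1, X_2 \subseteq X$ be subspaces with $\mathrm{cl}_X(X_1) \cap \mathrm{cl}_X(X_2) = \emptyset$. Let $q \geq 0$ be an integer, and assume the singular homology groups $H_q(X_1;F)$, $H_q(X_2;F)$, $H_q(X;F)$ are finite-dimensional. Let $\rho_i : H_q(X_i;F) \to H_q(X;F)$ ($i=1,2$) be induced by the inclusions, and let $\Gamma = \{ (s_1,s_2) \in H_q(X_1;F) \oplus H_q(X_2;F) : \rho_1(s_1) = \rho_2(s_2) \}$. Consider the persistent homology $\mathcal{P}_q(\mathcal{G}_1) : 0 \to H_q(X_1;F) \to H_q(X_1 \cup X_2;F) \to H_q(X;F)$ of the filtration $\mathcal{G}_1 : \emptyset \subseteq X_1 \subseteq X_1 \cup X_2 \subseteq X$ (indexed $0,1,2,3$, maps induced by inclusions). Then the number of barcodes $(3,+\infty)$ in $\mathcal{P}_q(\mathcal{G}_1)$ equals $$\dim_F H_q(X;F) - \dim_F H_q(X_1;F) - \dim_F H_q(X_2;F) + \dim_F \Gamma.$$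
   Context: Homology is singular homology with coefficients in $F$. For a filtration $\emptyset = Y_0 \subseteq Y_1 \subseteq \cdots \subseteq Y_n$, $\rho_{i,j} : H_q(Y_i;F) \to H_q(Y_j;F)$ denotes the map induced by inclusion. An element $s \in H_q(Y_i;F)$ is born at $i$ if $s \notin \operatorname{im}(\rho_{i-1,i})$; it dies at $j$ if $\rho_{i,j-1}(s) \notin \operatorname{im}(\rho_{i-1,j-1})$ and $\rho_{i,j}(s) \in \operatorname{im}(\rho_{i-1,j})$, and its death is $+\infty$ if it is still alive at $n$. The pair (birth, death) is its persistence barcode; the barcodes of the persistent homology form a multiset (the interval decomposition of the persistence module), and ''the number of barcodes $(3,+\infty)$'' is the multiplicity of the bar born at index $3$ that never dies. *)

From HB Require Import structures.
From mathcomp Require Import all_boot all_order all_algebra.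
From mathcomp Require Import all_classical all_reals all_analysis.
From mathcomp Require Import Rstruct Rstruct_topology.

Set Implicit Arguments.
Unset Strict Implicit.
Unset Printing Implicit Defensive.
Import Order.TTheory GRing.Theory Num.Theory.

Local Open Scope ring_scope.
Local Open Scope classical_set_scope.

Notation RR := Rdefinitions.R.

Definition std_simplex (q : nat) : set 'rV[RR]_(q.+1) :=
  [set x | (forall i, 0 <= x ord0 i) /\ \sum_i x ord0 i = 1].
Arguments std_simplex q : clear implicits.

(* The i-th face map Delta_q -> Delta_(q+1): insert a 0 at coordinate i. *)
Definition face_vec (q : nat) (i : 'I_(q.+2)) (x : 'rV[RR]_(q.+1))
  : 'rV[RR]_(q.+2) :=
  \row_(j < q.+2) (if unlift i j is Some k then x ord0 k else 0).

Section Singular.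
Variables (F : fieldType) (X : topologicalType).

(* A singular q-simplex is represented by a map R^(q+1) -> X; only its
   restriction to Delta_q matters (two representatives agreeing on
   Delta_q denote the same simplex, see [coef]). *)
Definition sing (q : nat) := 'rV[RR]_(q.+1) -> X.

(* Formal F-linear combinations of singular simplices. *)
Definition chain (q : nat) := seq (F * sing q).

Definition same_simplex (q : nat) (s t : sing q) : Prop :=
  forall x, std_simplex q x -> s x = t x.

Definition coef (q : nat) (c : chain q) (t : sing q) : F :=
  \sum_(p <- c) (if `[< same_simplex p.2 t >] then p.1 else 0).

(* Equality of chains (as elements of the free F-vector space). *)
Definition chain_eq (q : nat) (c d : chain q) : Prop :=
  forall t, coef c t = coef d t.

Definition bd (q : nat) (c : chain q.+1) : chain q :=
  flatten [seq [seq ((-1) ^+ (nat_of_ord i) * p.1, p.2 \o @face_vec q i)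
               | i : 'I_(q.+2) <- enum 'I_(q.+2)] | p <- c].

Definition is_chain (Y : set X) (q : nat) (c : chain q) : Prop :=
  forall p, List.In p c ->
    {within std_simplex q, continuous p.2} /\ p.2 @` std_simplex q `<=` Y.

Definition is_cycle (Y : set X) (q : nat) : chain q -> Prop :=
  match q return chain q -> Prop with
  | 0 => fun z => is_chain Y z
  | q'.+1 => fun z => is_chain Y z /\ chain_eq (bd z) [::]
  end.

Definition is_bd (Y : set X) (q : nat) (c : chain q) : Prop :=
  exists d : chain q.+1, is_chain Y d /\ chain_eq (bd d) c.

Definition combo (q k : nat) (a : 'I_k -> F) (z : 'I_k -> chain q) : chain q :=
  flatten [seq [seq (a i * p.1, p.2) | p <- z i] | i <- enum 'I_k].

Definition chain_sub (q : nat) (c d : chain q) : chain q :=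
  c ++ [seq (- p.1, p.2) | p <- d].

(* z_0..z_(k-1) are q-cycles of Y whose classes become linearly
   independent in H_q(Y';F) (i.e. their images under the inclusion-induced
   map H_q(Y) -> H_q(Y') are independent). *)
Definition hindep (Y Y' : set X) (q k : nat) (z : 'I_k -> chain q) : Prop :=
  (forall i, is_cycle Y (z i)) /\
  (forall a : 'I_k -> F, is_bd Y' (combo a z) -> forall i, a i = 0).

End Singular.

(* The maximum of a set of naturals (0 if it has no maximum). *)
Definition maxnat (P : nat -> Prop) : nat :=
  xget 0%N [set d | P d /\ forall k, P k -> (k <= d)%N].

(* rank of H_q(Y;F) -> H_q(Y';F) induced by inclusion (Y ⊆ Y'). *)
Definition rk (F : fieldType) (X : topologicalType) (Y Y' : set X) (q : nat)
  : nat :=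
  maxnat (fun k => exists z : 'I_k -> chain F X q, hindep Y Y' z).

Definition dimH (F : fieldType) (X : topologicalType) (Y : set X) (q : nat)
  : nat := rk F Y Y q.

Definition finH (F : fieldType) (X : topologicalType) (Y : set X) (q : nat)
  : Prop :=
  exists n, forall k (z : 'I_k -> chain F X q), hindep Y Y z -> (k <= n)%N.

(* dim_F of Gamma = {(s1,s2) in H_q(X1) (+) H_q(X2) | rho1 s1 = rho2 s2}:
   elements of Gamma are represented by pairs of cycles (z1,z2) with
   z1 - z2 a boundary in X; independence is taken in H_q(X1) (+) H_q(X2). *)
Definition dimGamma (F : fieldType) (X : topologicalType) (X1 X2 : set X)
  (q : nat) : nat :=
  maxnat (fun k => exists z1 z2 : 'I_k -> chain F X q,
    (forall i, [/\ is_cycle X1 (z1 i), is_cycle X2 (z2 i)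
                 & is_bd setT (chain_sub (z1 i) (z2 i))]) /\
    (forall a : 'I_k -> F, is_bd X1 (combo a z1) -> is_bd X2 (combo a z2) ->
       forall i, a i = 0)).

(* Multiplicity of the barcode (b, d) in the persistent homology P_q of a
   filtration G_0 = emptyset ⊆ G_1 ⊆ ... ⊆ G_n (1 <= b <= n, and
   d = Some j with b < j <= n, or d = None for death +oo), via the rank
   invariant r_{i,j} = rank(rho_{i,j}). *)
Definition bar_mult (F : fieldType) (X : topologicalType) (G : nat -> set X)
  (n q b : nat) (d : option nat) : int :=
  let r i j := (rk F (G i) (G j) q)%:Z in
  match d with
  | None => r b n - r b.-1 n
  | Some j => r b j.-1 - r b.-1 j.-1 - r b j + r b.-1 j
  end.

Definition G1 (X : topologicalType) (X1 X2 : set X) (i : nat) : set X :=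
  match i with
  | 0 => set0
  | 1 => X1
  | 2 => X1 `|` X2
  | _ => setT
  end.

(* As cl X1 and cl X2 are disjoint and the standard simplex is connected,
   every singular simplex of X1 u X2 lies in X1 or in X2, so every q-cycle
   of X1 u X2 is the sum of a cycle of X1 and a cycle of X2.  Hence, for
   bases u of H_q(X1) and v of H_q(X2), the family u ++ v spans the image of
   H_q(X1 u X2) in H_q(X).  If K is the space of coefficient vectors (a, b)
   for which sum a_i u_i + sum b_j v_j bounds in X, that image has dimension
   dim H_q(X1) + dim H_q(X2) - dim K, and (a, b) |-> (sum a_i u_i,
   - sum b_j v_j) identifies K with Gamma.  The bar (3, +oo) has multiplicity
   dim H_q(X) minus the rank of H_q(X1 u X2) -> H_q(X). *)

From HB Require Import structures.
From mathcomp Require Import all_boot all_order all_algebra.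
From mathcomp Require Import all_classical all_reals all_analysis.
From mathcomp Require Import Rstruct Rstruct_topology.
From mathcomp Require Import ring zify.
From Stdlib Require List.

Set Implicit Arguments.
Unset Strict Implicit.
Unset Printing Implicit Defensive.
Import Order.TTheory GRing.Theory Num.Theory.
Local Open Scope ring_scope.
Local Open Scope classical_set_scope.

Lemma star_shaped_connected (V : normedModType RR) (A : set V) (c : V) :
  A c -> (forall y t, A y -> 0 <= t <= 1 -> A (c + t *: (y - c))) ->
  connected A.
Proof.
move=> Ac starA.
pose seg y := (fun t : RR => c + t *: (y - c)) @` `[0, 1].
have -> : A = \bigcup_(y in A) seg y.
  apply/seteqP; split=> [y Ay|_ [y Ay [t t01 <-]]].
    exists y => //; exists 1; first by rewrite /= in_itv /= lexx ler01.
    by rewrite scale1r addrC subrK.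
  by apply: starA; rewrite /= in_itv in t01.
apply: bigcup_connected.
  exists c => y _; exists 0; first by rewrite /= in_itv /= lexx ler01.
  by rewrite scale0r addr0.
move=> y _; apply: connected_continuous_connected.
  exact: segment_connected.
apply: continuous_subspaceT => t.
apply: (@continuousD _ _ _ (cst c) (fun t : RR => t *: (y - c))).
  exact: cst_continuous.
exact: continuousZr_tmp.
Qed.

Definition vertex0 (q : nat) : 'rV[RR]_(q.+1) := \row_j (j == ord0)%:R.

Lemma std_simplex_vertex0 q : std_simplex q (vertex0 q).
Proof.
split=> [i|]; first by rewrite mxE ler0n.
rewrite (bigD1 ord0) //= big1 ?mxE ?eqxx ?addr0 // => i /negPf i0.
by rewrite mxE i0.
Qed.

Lemma std_simplex_segment q (x y : 'rV[RR]_(q.+1)) (t : RR) :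
  std_simplex q x -> std_simplex q y -> 0 <= t <= 1 ->
  std_simplex q (x + t *: (y - x)).
Proof.
move=> [x_ge0 x1] [y_ge0 y1] /andP[t_ge0 t_le1]; split=> [i|].
  rewrite !mxE.
  have -> : x 0 i + t * (y 0 i - x 0 i) = (1 - t) * x 0 i + t * y 0 i by ring.
  by apply: addr_ge0; apply: mulr_ge0; rewrite ?subr_ge0.
under eq_bigr do rewrite !mxE.
rewrite big_split /= -mulr_sumr sumrB x1 y1; ring.
Qed.

Lemma std_simplex_connected q : connected (std_simplex q).
Proof.
apply: (star_shaped_connected (@std_simplex_vertex0 q)) => y t Sy t01.
exact: std_simplex_segment (@std_simplex_vertex0 q) Sy t01.
Qed.

Lemma std_simplex_face q (i : 'I_q.+2) x :
  std_simplex q x -> std_simplex q.+1 (face_vec i x).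
Proof.
move=> [x_ge0 x1]; split=> [j|]; first by rewrite mxE; case: unlift.
rewrite (bigD1_ord i) //= mxE unlift_none add0r -x1.
by apply: eq_bigr => j _; rewrite mxE liftK.
Qed.

Lemma singular_simplex_separated (X : topologicalType) (X1 X2 : set X) q
    (s : 'rV[RR]_(q.+1) -> X) :
  closure X1 `&` closure X2 = set0 -> {within std_simplex q, continuous s} ->
  s @` std_simplex q `<=` X1 `|` X2 ->
  s @` std_simplex q `<=` X1 \/ s @` std_simplex q `<=` X2.
Proof.
move=> cl12 s_cont s_sub; apply: connected_subset => //.
  split; apply/seteqP; split=> // x [x1 x2]; rewrite -cl12;
    by split=> //; apply: subset_closure.
exact: connected_continuous_connected (@std_simplex_connected q) s_cont.
Qed.

Definition catf (A : Type) d1 d2 (u : 'I_d1 -> A) (v : 'I_d2 -> A)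
    (i : 'I_(d1 + d2)) : A :=
  match fintype.split i with inl j => u j | inr j => v j end.

Section Chains.
Variables (F : fieldType) (X : topologicalType).
Implicit Types (Y : set X) (q : nat).

Definition eval_cochain q (g : sing X q -> F) (c : chain F X q) : F :=
  \sum_(p <- c) p.1 * g p.2.

Definition cobd q (g : sing X q -> F) (s : sing X q.+1) : F :=
  \sum_(i < q.+2) (-1) ^+ i * g (s \o @face_vec q i).

Definition simplex_ind q (t s : sing X q) : F :=
  if `[< same_simplex s t >] then 1 else 0.

Lemma eval_cochain_cat q g (c d : chain F X q) :
  eval_cochain g (c ++ d) = eval_cochain g c + eval_cochain g d.
Proof. by rewrite /eval_cochain big_cat. Qed.

Lemma eval_cochain_scale q g a (c : chain F X q) :
  eval_cochain g [seq (a * p.1, p.2) | p <- c] = a * eval_cochain g c.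
Proof.
rewrite /eval_cochain big_map mulr_sumr.
by apply: eq_bigr => p _; rewrite mulrA.
Qed.

Lemma eval_cochain_sub q g (c d : chain F X q) :
  eval_cochain g (chain_sub c d) = eval_cochain g c - eval_cochain g d.
Proof.
rewrite eval_cochain_cat /eval_cochain big_map -sumrN.
by under [X in _ + X]eq_bigr do rewrite mulNr.
Qed.

Lemma eval_cochain_combo q g k (a : 'I_k -> F) (z : 'I_k -> chain F X q) :
  eval_cochain g (combo a z) = \sum_i a i * eval_cochain g (z i).
Proof.
rewrite /combo /eval_cochain big_flatten big_map big_enum /=.
by apply: eq_bigr => i _; rewrite -/(eval_cochain _ _) eval_cochain_scale.
Qed.

Lemma eval_cochain_filter q g (P : pred (F * sing X q)) (c : chain F X q) :
  eval_cochain g c =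
    eval_cochain g (seq.filter P c) + eval_cochain g (seq.filter (predC P) c).
Proof. by rewrite /eval_cochain !big_filter (bigID P). Qed.

Lemma eval_cochain_bd q g (c : chain F X q.+1) :
  eval_cochain g (bd c) = eval_cochain (cobd g) c.
Proof.
rewrite /bd /eval_cochain big_flatten big_map; apply: eq_bigr => p _.
rewrite big_map big_enum /= /cobd mulr_sumr; apply: eq_bigr => i _ /=.
by rewrite mulrCA mulrA.
Qed.

Lemma coefE q (c : chain F X q) t : coef c t = eval_cochain (simplex_ind t) c.
Proof.
apply: eq_bigr => p _; rewrite /simplex_ind.
by case: ifP; rewrite ?mulr1 ?mulr0.
Qed.

Lemma coef_nil q (t : sing X q) : coef ([::] : chain F X q) t = 0.
Proof. by rewrite /coef big_nil. Qed.

Lemma coef_cat q (c d : chain F X q) t : coef (c ++ d) t = coef c t + coef d t.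
Proof. by rewrite !coefE eval_cochain_cat. Qed.

Lemma coef_scale q a (c : chain F X q) t :
  coef [seq (a * p.1, p.2) | p <- c] t = a * coef c t.
Proof. by rewrite !coefE eval_cochain_scale. Qed.

Lemma coef_sub q (c d : chain F X q) t :
  coef (chain_sub c d) t = coef c t - coef d t.
Proof. by rewrite !coefE eval_cochain_sub. Qed.

Lemma coef_combo q k (a : 'I_k -> F) (z : 'I_k -> chain F X q) t :
  coef (combo a z) t = \sum_i a i * coef (z i) t.
Proof.
by rewrite coefE eval_cochain_combo; under eq_bigr do rewrite -coefE.
Qed.

Lemma coef_bd q (c : chain F X q.+1) t :
  coef (bd c) t = eval_cochain (cobd (simplex_ind t)) c.
Proof. by rewrite coefE eval_cochain_bd. Qed.

Lemma combo_rowE q k (a : 'I_k -> F) (z : 'I_k -> chain F X q) :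
  combo ((\row_i a i) 0) z = combo a z.
Proof. by rewrite /combo; congr flatten; apply: eq_map => i; rewrite mxE. Qed.

Definition coef_col q n (w : 'I_n -> chain F X q) (t : sing X q) : 'cV[F]_n :=
  \col_i coef (w i) t.

Lemma coef_combo_mx q n (r : 'rV[F]_n) (w : 'I_n -> chain F X q) t :
  coef (combo (r 0) w) t = (r *m coef_col w t) 0 0.
Proof. by rewrite coef_combo mxE; apply: eq_bigr => i _; rewrite mxE. Qed.

Lemma coef_col_rows q k n (R : 'M[F]_(k, n)) (w : 'I_n -> chain F X q) t :
  coef_col (fun i => combo (row i R 0) w) t = R *m coef_col w t.
Proof.
apply/colP => i; rewrite !mxE coef_combo.
by apply: eq_bigr => j _; rewrite !mxE.
Qed.

Lemma is_chain_cat Y q (c d : chain F X q) :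
  is_chain Y c -> is_chain Y d -> is_chain Y (c ++ d).
Proof. by move=> hc hd p /List.in_app_iff[/hc|/hd]. Qed.

Lemma is_chain_rescale Y q (f : F * sing X q -> F) (c : chain F X q) :
  is_chain Y c -> is_chain Y [seq (f p, p.2) | p <- c].
Proof. by move=> hc _ /List.in_map_iff[p [<- /hc]]. Qed.

Lemma is_chain_combo Y q k (a : 'I_k -> F) (z : 'I_k -> chain F X q) :
  (forall i, is_chain Y (z i)) -> is_chain Y (combo a z).
Proof.
move=> hz p /List.in_concat[_ [/List.in_map_iff[i [<- _]]]].
exact: is_chain_rescale (hz i) p.
Qed.

Lemma is_chainS Y Y' q (c : chain F X q) :
  Y `<=` Y' -> is_chain Y c -> is_chain Y' c.
Proof.
by move=> YY' hc p /hc[p_cont p_sub]; split=> //; apply: subset_trans YY'.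
Qed.

Lemma is_bd_eq Y q (c d : chain F X q) :
  chain_eq c d -> is_bd Y d -> is_bd Y c.
Proof. by move=> cd [e [he ed]]; exists e; split=> // t; rewrite ed cd. Qed.

Lemma is_bd_nil Y q (c : chain F X q) : chain_eq c [::] -> is_bd Y c.
Proof. by move=> c0; exists [::]; split=> // t; rewrite c0 /coef big_nil. Qed.

Lemma is_bd_cat Y q (c d : chain F X q) :
  is_bd Y c -> is_bd Y d -> is_bd Y (c ++ d).
Proof.
move=> [c' [hc' c'c]] [d' [hd' d'd]]; exists (c' ++ d').
by split=> [|t]; [apply: is_chain_cat | rewrite coef_cat !coef_bd
  eval_cochain_cat -!coef_bd c'c d'd].
Qed.

Lemma is_bd_scale Y q a (c : chain F X q) :
  is_bd Y c -> is_bd Y [seq (a * p.1, p.2) | p <- c].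
Proof.
move=> [c' [hc' c'c]]; exists [seq (a * p.1, p.2) | p <- c'].
split=> [|t]; first exact: is_chain_rescale.
by rewrite coef_scale coef_bd eval_cochain_scale -coef_bd c'c.
Qed.

Lemma is_bd_sub Y q (c d : chain F X q) :
  is_bd Y c -> is_bd Y d -> is_bd Y (chain_sub c d).
Proof.
move=> hc /(is_bd_scale (-1)) hd; apply: is_bd_eq (is_bd_cat hc hd) => t.
by rewrite coef_sub coef_cat coef_scale mulN1r.
Qed.

Lemma is_bd_subrr Y q (c : chain F X q) : is_bd Y (chain_sub c c).
Proof. by apply: is_bd_nil => t; rewrite coef_sub subrr coef_nil. Qed.

Lemma is_bd_combo Y q k (a : 'I_k -> F) (z : 'I_k -> chain F X q) :
  (forall i, is_bd Y (z i)) -> is_bd Y (combo a z).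
Proof.
move=> /fin_all_exists[e he]; exists (combo a e); split=> [|t].
  by apply: is_chain_combo => i; case: (he i).
rewrite coef_combo coef_bd eval_cochain_combo; apply: eq_bigr => i _.
by case: (he i) => _ <-; rewrite coef_bd.
Qed.

Lemma is_bdS Y Y' q (c : chain F X q) : Y `<=` Y' -> is_bd Y c -> is_bd Y' c.
Proof.
by move=> YY' [d [hd dc]]; exists d; split=> //; apply: is_chainS hd.
Qed.

Lemma is_cycle_chain Y q (c : chain F X q) : is_cycle Y c -> is_chain Y c.
Proof. by case: q c => [|q] c //= []. Qed.

Lemma is_cycle_combo Y q k (a : 'I_k -> F) (z : 'I_k -> chain F X q) :
  (forall i, is_cycle Y (z i)) -> is_cycle Y (combo a z).
Proof.
move=> hz; have hc : is_chain Y (combo a z).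
  by apply: is_chain_combo => i; apply: is_cycle_chain.
case: q z hz hc => [|q] z hz hc //=; split=> // t.
rewrite coef_bd eval_cochain_combo coef_nil big1 // => i _.
by case: (hz i) => _ /(_ t); rewrite coef_bd coef_nil => ->; rewrite mulr0.
Qed.

Lemma is_cycleS Y Y' q (c : chain F X q) :
  Y `<=` Y' -> is_cycle Y c -> is_cycle Y' c.
Proof.
case: q c => [|q] c YY' /=; first exact: is_chainS.
by case=> hc hbd; split=> //; apply: is_chainS hc.
Qed.

Lemma sum_neq0_witness (I : Type) (r : seq I) (f : I -> F) :
  \sum_(i <- r) f i != 0 -> exists2 i, List.In i r & f i != 0.
Proof.
elim: r => [|i r IHr]; first by rewrite big_nil eqxx.
rewrite big_cons; have [fi0 | fi_neq0] := eqVneq (f i) 0; last first.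
  by exists i; [left|].
by rewrite fi0 add0r => /IHr[j jr fj]; exists j; [right|].
Qed.

(* Such a simplex agrees on the standard simplex with a face of a simplex of
   [Y]; [vertex0 q] is merely a convenient point at which to evaluate it. *)
Lemma bd_coef_support Y q (c : chain F X q.+1) t :
  is_chain Y c -> coef (bd c) t != 0 -> Y (t (vertex0 q)).
Proof.
move=> hc; rewrite coef_bd => /sum_neq0_witness[p pc].
rewrite mulf_eq0 negb_or => /andP[_ /sum_neq0_witness[i _]].
rewrite mulf_eq0 negb_or /simplex_ind => /andP[_].
case: asboolP => [same_pt _|]; last by rewrite eqxx.
rewrite -(same_pt _ (@std_simplex_vertex0 q)); have [_ p_sub] := hc p pc.
apply: p_sub; exists (face_vec i (vertex0 q)) => //.
exact/std_simplex_face/std_simplex_vertex0.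
Qed.

Lemma bd_cat_separated (Y1 Y2 : set X) q (c1 c2 : chain F X q.+1) :
  Y1 `&` Y2 = set0 -> is_chain Y1 c1 -> is_chain Y2 c2 ->
  chain_eq (bd (c1 ++ c2)) [::] -> chain_eq (bd c1) [::].
Proof.
move=> Y12 hc1 hc2 bd0 t; apply/eqP; rewrite coef_nil; apply: contraT => nz1.
have nz2 : coef (bd c2) t != 0.
  apply: contra_neq nz1 => z2; move: (bd0 t).
  by rewrite coef_nil coef_bd eval_cochain_cat -!coef_bd z2 addr0.
have : (Y1 `&` Y2) (t (vertex0 q)).
  by split; [apply: bd_coef_support hc1 nz1 | apply: bd_coef_support hc2 nz2].
by rewrite Y12.
Qed.

Lemma cycle_split (X1 X2 : set X) q (z : chain F X q) :
  closure X1 `&` closure X2 = set0 -> is_cycle (X1 `|` X2) z ->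
  exists z1 z2, [/\ is_cycle X1 z1, is_cycle X2 z2 & chain_eq z (z1 ++ z2)].
Proof.
move=> cl12 z_cycle; have z_chain := is_cycle_chain z_cycle.
have X12 : X1 `&` X2 = set0.
  by rewrite -subset0 -cl12; apply: setISS; apply: subset_closure.
pose P (p : F * sing X q) := `[< p.2 @` std_simplex q `<=` X1 >].
pose z1 := seq.filter P z; pose z2 := seq.filter (predC P) z.
have z1_chain : is_chain X1 z1.
  move=> p /List.filter_In[pz /asboolP]; by case: (z_chain p pz).
have z2_chain : is_chain X2 z2.
  move=> p /List.filter_In[pz /= /asboolP p_notX1].
  have [p_cont p_sub] := z_chain p pz; split=> //.
  by case: (singular_simplex_separated cl12 p_cont p_sub).
have z_split : chain_eq z (z1 ++ z2).
  by move=> t; rewrite !coefE eval_cochain_cat -eval_cochain_filter.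
suff [] : is_cycle X1 z1 /\ is_cycle X2 z2 by exists z1, z2.
move: z1_chain z2_chain; rewrite /z1 /z2; clear z_split z1 z2.
case: q z P z_cycle z_chain => [|q] z P //= [_ bd0] _ z1_chain z2_chain.
have bd_split : chain_eq (bd (seq.filter P z ++ seq.filter (predC P) z)) [::].
  by move=> t; rewrite -(bd0 t) !coef_bd eval_cochain_cat -eval_cochain_filter.
split; split=> //; first exact: bd_cat_separated X12 z1_chain z2_chain bd_split.
apply: bd_cat_separated z2_chain z1_chain _; first by rewrite setIC.
by move=> t; rewrite -(bd_split t) !coef_bd !eval_cochain_cat addrC.
Qed.

Lemma coef_col_catf q d1 d2 (u : 'I_d1 -> chain F X q)
    (v : 'I_d2 -> chain F X q) t :
  coef_col (catf u v) t = col_mx (coef_col u t) (coef_col v t).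
Proof.
apply/colP => i; rewrite -[i]splitK.
by case: (fintype.split i) => j;
  rewrite ?col_mxEu ?col_mxEd !mxE /catf unsplitK.
Qed.

Lemma coef_combo_catf q d1 d2 (a : 'rV[F]_d1) (b : 'rV[F]_d2)
    (u : 'I_d1 -> chain F X q) (v : 'I_d2 -> chain F X q) t :
  coef (combo (row_mx a b 0) (catf u v)) t =
    coef (combo (a 0) u) t + coef (combo (b 0) v) t.
Proof. by rewrite !coef_combo_mx coef_col_catf mul_row_col mxE. Qed.

End Chains.

Lemma maxnatE (P : nat -> Prop) d :
  P d -> (forall k, P k -> (k <= d)%N) -> maxnat P = d.
Proof.
move=> Pd d_max; apply: xget_unique; first by split.
by move=> e [Pe e_max]; apply/eqP; rewrite eqn_leq d_max // e_max.
Qed.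

Lemma maxnat_max (P : nat -> Prop) :
  P 0%N -> (exists n, forall k, P k -> (k <= n)%N) ->
  P (maxnat P) /\ forall k, P k -> (k <= maxnat P)%N.
Proof.
move=> P0 [n P_le_n].
have exP : exists k, `[< P k >] by exists 0%N; apply/asboolP.
have ubP k : `[< P k >] -> (k <= n)%N by move/asboolP/P_le_n.
case: (ex_maxnP exP ubP) => d /asboolP Pd d_max.
have d_ub k : P k -> (k <= d)%N by move=> Pk; apply/d_max/asboolP.
by rewrite (maxnatE Pd d_ub).
Qed.


Section HomologyFamilies.
Variables (F : fieldType) (X : topologicalType) (q : nat).
Implicit Types (Y : set X).

Definition hspan Y Y' n (w : 'I_n -> chain F X q) : Prop :=
  forall z, is_cycle Y z ->
    exists r : 'rV[F]_n, is_bd Y' (chain_sub z (combo (r 0) w)).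

Lemma hindepE Y Y' k (z : 'I_k -> chain F X q) :
  hindep Y Y' z <->
  (forall i, is_cycle Y (z i)) /\
  (forall r : 'rV[F]_k, is_bd Y' (combo (r 0) z) -> r = 0).
Proof.
split=> [] [z_cycle z_indep]; split=> //.
  by move=> r r_bd; apply/rowP => i; rewrite mxE; apply: z_indep r_bd i.
move=> a a_bd i; rewrite -combo_rowE in a_bd.
by have /rowP/(_ i) := z_indep _ a_bd; rewrite !mxE.
Qed.

Lemma is_bd_combo_rows Y k n (z : 'I_k -> chain F X q)
    (w : 'I_n -> chain F X q) (A : 'M[F]_(k, n)) (x : 'rV[F]_k) :
  (forall i, is_bd Y (chain_sub (z i) (combo (row i A 0) w))) ->
  is_bd Y (combo (x 0) z) <-> is_bd Y (combo ((x *m A) 0) w).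
Proof.
pose D i := chain_sub (z i) (combo (row i A 0) w).
move=> /(is_bd_combo (x 0)) D_bd.
have z_split t : coef (combo (x 0) z) t =
    coef (combo (x 0) D) t + coef (combo ((x *m A) 0) w) t.
  have D_col : coef_col D t = coef_col z t - A *m coef_col w t.
    by rewrite -coef_col_rows; apply/colP => i; rewrite !mxE coef_sub.
  by rewrite !coef_combo_mx D_col mulmxBr mulmxA !mxE subrK.
split=> [z_bd | w_bd].
  apply: is_bd_eq (is_bd_sub z_bd D_bd) => t.
  by rewrite coef_sub z_split addrAC subrr add0r.
by apply: is_bd_eq (is_bd_cat D_bd w_bd) => t; rewrite coef_cat z_split.
Qed.

Lemma is_bd_combo_mulmx Y k n (w : 'I_n -> chain F X q) (A : 'M[F]_(k, n))
    (x : 'rV[F]_k) :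
  is_bd Y (combo (x 0) (fun i => combo (row i A 0) w)) <->
  is_bd Y (combo ((x *m A) 0) w).
Proof. exact: is_bd_combo_rows (fun i => is_bd_subrr _ _). Qed.

Lemma hspan_coords Y Y' n (w : 'I_n -> chain F X q) k
    (z : 'I_k -> chain F X q) :
  hspan Y Y' w -> (forall i, is_cycle Y (z i)) ->
  exists A : 'M[F]_(k, n),
    forall i, is_bd Y' (chain_sub (z i) (combo (row i A 0) w)).
Proof.
move=> w_span /(fun z_cycle i => w_span _ (z_cycle i))/fin_all_exists[r hr].
by exists (\matrix_i r i) => i; rewrite rowK.
Qed.

End HomologyFamilies.

Section HomologyBasis.
Variables (F : fieldType) (X : topologicalType) (Y : set X) (q d : nat).
Variable u : 'I_d -> chain F X q.
Hypothesis u_indep : hindep Y Y u.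
Hypothesis u_max :
  forall k (z : 'I_k -> chain F X q), hindep Y Y z -> (k <= d)%N.

Lemma is_bd_basis_combo (r : 'rV[F]_d) : is_bd Y (combo (r 0) u) <-> r = 0.
Proof.
split=> [|->]; first exact: ((hindepE Y Y u).1 u_indep).2.
by apply: is_bd_nil => t; rewrite coef_combo_mx mul0mx mxE coef_nil.
Qed.

(* By maximality [z] satisfies a nontrivial relation with [u], in which the
   coefficient [c] of [z] is nonzero by independence of [u]. *)
Lemma basis_hspan : hspan Y Y u.
Proof.
move=> z z_cycle; pose u' := catf u (fun _ : 'I_1 => z).
have [r [r_bd r_neq0]] : exists r : 'rV_(d + 1),
    is_bd Y (combo (r 0) u') /\ r != 0.
  apply: contrapT => no_rel.
  suff /u_max : hindep Y Y u' by rewrite addn1 ltnn.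
  apply/hindepE; split=> [i|r r_bd].
    by rewrite /u' /catf; case: fintype.split => // j; case: u_indep.
  by apply/eqP; apply: contrapT => /negP r_neq0; apply: no_rel; exists r.
pose a := lsubmx r; pose c := rsubmx r 0 0.
have r_coef t :
    coef (combo (r 0) u') t = coef (combo (a 0) u) t + c * coef z t.
  rewrite !coef_combo_mx coef_col_catf -[r]hsubmxK mul_row_col mxE.
  by congr (_ + _); rewrite mxE big_ord1 [coef_col _ _ _ _]mxE.
have [c0 | c_neq0] := eqVneq c 0.
  have a0 : a = 0.
    apply/is_bd_basis_combo; apply: is_bd_eq r_bd => t.
    by rewrite r_coef c0 mul0r addr0.
  have rr0 : rsubmx r = 0 by apply/rowP => i; rewrite (ord1 i) [RHS]mxE.
  by move: r_neq0; rewrite -[r]hsubmxK -/a a0 rr0 row_mx0 eqxx.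
exists (- c^-1 *: a); apply: is_bd_eq (is_bd_scale c^-1 r_bd) => t.
rewrite coef_sub coef_scale r_coef !coef_combo_mx -scalemxAl mxE.
by field.
Qed.

End HomologyBasis.

Lemma dimH_basis (F : fieldType) (X : topologicalType) (Y : set X) q :
  finH F Y q -> exists u : 'I_(dimH F Y q) -> chain F X q,
    hindep Y Y u /\
    forall k (z : 'I_k -> chain F X q), hindep Y Y z -> (k <= dimH F Y q)%N.
Proof.
move=> [n n_max]; pose P k := exists z : 'I_k -> chain F X q, hindep Y Y z.
have P0 : P 0%N by exists (fun _ => [::]); split=> [[]|a _ []].
have P_bound : exists n, forall k, P k -> (k <= n)%N.
  by exists n => k [z /n_max].
have [[u hu] u_max] := maxnat_max P0 P_bound.
by exists u; split=> // k z hz; apply: u_max; exists z.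
Qed.

Section RowSpaces.
Variable F : fieldType.

Definition indep_mod k m n (R : 'M[F]_(k, n)) (M : 'M[F]_(m, n)) : Prop :=
  forall x : 'rV_k, (x *m R <= M)%MS -> x = 0.

Lemma row_free_col_mx k n (M : 'M[F]_(k, n)) (r : 'rV[F]_n) :
  row_free M -> ~~ (r <= M)%MS -> row_free (col_mx M r).
Proof.
move=> /eqP M_free r_notin; rewrite /row_free eqn_leq rank_leq_row /=.
have -> : \rank (col_mx M r) = \rank (M + r)%MS by rewrite addsmxE.
rewrite addn1 -[X in (X < _)%N]M_free; apply: rank_ltmx.
by rewrite ltmxE addsmxSl /= addsmx_sub submx_refl.
Qed.

Lemma lin_closed_row_space n (P : 'rV[F]_n -> Prop) :
  (forall k (x : 'rV[F]_k) (R : 'M[F]_(k, n)),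
     (forall i, P (row i R)) -> P (x *m R)) ->
  exists k (M : 'M[F]_(k, n)), forall r, P r <-> (r <= M)%MS.
Proof.
move=> P_closed.
pose Q k := exists M : 'M[F]_(k, n), row_free M /\ forall i, P (row i M).
have Q0 : Q 0%N by exists 0; split=> [|[]//]; rewrite /row_free mxrank0.
have Q_bound k : Q k -> (k <= n)%N.
  by move=> [M [/eqP M_free _]]; rewrite -[X in (X <= _)%N]M_free rank_leq_col.
have [[M [M_free M_P]] M_max] := maxnat_max Q0 (ex_intro _ n Q_bound).
exists (maxnat Q), M => r; split=> [Pr | /submxP[x ->]]; last exact: P_closed.
apply: contrapT => /negP r_notin.
suff /M_max : Q (maxnat Q + 1)%N by rewrite addn1 ltnn.
exists (col_mx M r); split; first exact: row_free_col_mx.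
move=> i; rewrite -[i]splitK; case: (fintype.split i) => j /=.
  by rewrite rowKu.
by rewrite rowKd row_id.
Qed.

Lemma rank_indep_mod k m n (R : 'M[F]_(k, n)) (M : 'M[F]_(m, n)) :
  indep_mod R M -> (k + \rank M <= n)%N.
Proof.
move=> R_indep.
have R_free : row_free R.
  by apply: inj_row_free => x xR0; apply: R_indep; rewrite xR0 sub0mx.
have RM0 : (R :&: M)%MS = 0.
  apply/eqP; rewrite -submx0; apply/rV_subP => v.
  rewrite sub_capmx => /andP[/submxP[x ->] xRM].
  by rewrite (R_indep x xRM) mul0mx sub0mx.
by rewrite -(eqP R_free) -mxrank_disjoint_sum // rank_leq_col.
Qed.

Lemma row_base_compl_indep m n (M : 'M[F]_(m, n)) :
  indep_mod (row_base M^C)%MS M.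
Proof.
move=> x xM; apply/eqP; rewrite -(mulmx_free_eq0 _ (row_base_free _)) -submx0.
by rewrite -(capmx_compl M) sub_capmx xM -(eq_row_base M^C)%MS submxMl.
Qed.

End RowSpaces.

Lemma bd_combo_row_space (F : fieldType) (X : topologicalType) (Y : set X) q n
    (w : 'I_n -> chain F X q) :
  exists m (M : 'M[F]_(m, n)),
    forall r : 'rV[F]_n, is_bd Y (combo (r 0) w) <-> (r <= M)%MS.
Proof.
apply: lin_closed_row_space => k x R R_bd.
by apply/is_bd_combo_mulmx; apply: is_bd_combo.
Qed.

Section InducedRank.
Variables (F : fieldType) (X : topologicalType) (Y Y' : set X) (q n : nat).
Variable w : 'I_n -> chain F X q.
Hypotheses (w_cycle : forall i, is_cycle Y (w i)) (w_span : hspan Y Y' w).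
Variables (m : nat) (M : 'M[F]_(m, n)).
Hypothesis M_ker :
  forall r : 'rV[F]_n, is_bd Y' (combo (r 0) w) <-> (r <= M)%MS.

Lemma hindep_combo_rows k (R : 'M[F]_(k, n)) :
  indep_mod R M -> hindep Y Y' (fun i => combo (row i R 0) w).
Proof.
move=> R_indep; apply/hindepE; split=> [i|x]; first exact: is_cycle_combo.
by move/is_bd_combo_mulmx/M_ker/R_indep.
Qed.

Lemma hindep_indep_mod k (y : 'I_k -> chain F X q) :
  hindep Y Y' y ->
  exists R : 'M[F]_(k, n), indep_mod R M.
Proof.
move=> /hindepE[y_cycle y_indep]; have [R y_R] := hspan_coords w_span y_cycle.
by exists R => x /M_ker/(is_bd_combo_rows x y_R).2/y_indep.
Qed.

Lemma rk_ker_rank : rk F Y Y' q = (n - \rank M)%N.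
Proof.
apply: maxnatE => [|k [y /hindep_indep_mod[R /rank_indep_mod]]]; last first.
  by have := rank_leq_col M; lia.
rewrite -mxrank_compl; exists (fun i => combo (row i (row_base M^C)%MS 0) w).
exact/hindep_combo_rows/row_base_compl_indep.
Qed.

End InducedRank.

Lemma is_cycle_catf (F : fieldType) (X : topologicalType) (X1 X2 : set X) q
    d1 d2 (u : 'I_d1 -> chain F X q) (v : 'I_d2 -> chain F X q) :
  (forall i, is_cycle X1 (u i)) -> (forall i, is_cycle X2 (v i)) ->
  forall i, is_cycle (X1 `|` X2) (catf u v i).
Proof.
move=> u_cycle v_cycle i; rewrite /catf; case: fintype.split => j.
  exact: is_cycleS (@subsetUl _ _ X2) (u_cycle j).
exact: is_cycleS (@subsetUr _ X1 _) (v_cycle j).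
Qed.

Lemma hspan_catf (F : fieldType) (X : topologicalType) (X1 X2 : set X) q d1 d2
    (u : 'I_d1 -> chain F X q) (v : 'I_d2 -> chain F X q) :
  closure X1 `&` closure X2 = set0 -> hspan X1 X1 u -> hspan X2 X2 v ->
  hspan (X1 `|` X2) [set: X] (catf u v).
Proof.
move=> cl12 u_span v_span z /(cycle_split cl12)[z1 [z2 []]].
move=> /u_span[a /(is_bdS (subsetT _)) a_bd].
move=> /v_span[b /(is_bdS (subsetT _)) b_bd] z_eq.
exists (row_mx a b); apply: is_bd_eq (is_bd_cat a_bd b_bd) => t.
rewrite coef_cat !coef_sub z_eq coef_cat coef_combo_catf; ring.
Qed.

Definition gamma_indep (F : fieldType) (X : topologicalType) (X1 X2 : set X) q j
    (z1 z2 : 'I_j -> chain F X q) : Prop :=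
  (forall i, [/\ is_cycle X1 (z1 i), is_cycle X2 (z2 i)
               & is_bd setT (chain_sub (z1 i) (z2 i))]) /\
  (forall a : 'I_j -> F, is_bd X1 (combo a z1) -> is_bd X2 (combo a z2) ->
     forall i, a i = 0).

Section Gamma.
Variables (F : fieldType) (X : topologicalType) (X1 X2 : set X).
Variables (q d1 d2 : nat).
Variables (u : 'I_d1 -> chain F X q) (v : 'I_d2 -> chain F X q).
Hypotheses (u_indep : hindep X1 X1 u) (v_indep : hindep X2 X2 v).
Hypotheses (u_span : hspan X1 X1 u) (v_span : hspan X2 X2 v).
Variables (m : nat) (M : 'M[F]_(m, d1 + d2)).
Hypothesis M_ker : forall r : 'rV[F]_(d1 + d2),
  is_bd [set: X] (combo (r 0) (catf u v)) <-> (r <= M)%MS.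

Lemma gamma_indep_row_base :
  exists z1 z2 : 'I_(\rank M) -> chain F X q, gamma_indep X1 X2 z1 z2.
Proof.
pose B := row_base M; pose L := lsubmx B; pose N := rsubmx B.
exists (fun i => combo (row i L 0) u), (fun i => combo (row i (- N) 0) v).
split=> [i | a a1 a2].
  split; first by apply: is_cycle_combo => j; case: u_indep.
    by apply: is_cycle_combo => j; case: v_indep.
  have /M_ker B_bd : (row i B <= M)%MS.
    by rewrite (submx_trans (row_sub _ _)) ?eq_row_base.
  apply: is_bd_eq B_bd => t; rewrite coef_sub -[B]hsubmxK row_row_mx.
  by rewrite coef_combo_catf !coef_combo_mx raddfN mulNmx [X in _ - X]mxE opprK.
pose x := \row_i a i.
rewrite -combo_rowE -/x in a1; rewrite -combo_rowE -/x in a2.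
have xL : x *m L = 0 by apply/(is_bd_basis_combo u_indep)/is_bd_combo_mulmx.
have xN : x *m N = 0.
  apply/eqP; rewrite -oppr_eq0 -mulmxN; apply/eqP.
  by apply/(is_bd_basis_combo v_indep)/is_bd_combo_mulmx.
have /eqP : x *m B = 0 by rewrite -[B]hsubmxK mul_mx_row -/L -/N xL xN row_mx0.
rewrite mulmx_free_eq0 ?row_base_free // => /eqP/rowP x0 i.
by move: (x0 i); rewrite !mxE.
Qed.

Lemma gamma_indep_le j (z1 z2 : 'I_j -> chain F X q) :
  gamma_indep X1 X2 z1 z2 -> (j <= \rank M)%N.
Proof.
move=> [z_gamma z_indep].
have z1_cycle i : is_cycle X1 (z1 i) by case: (z_gamma i).
have z2_cycle i : is_cycle X2 (z2 i) by case: (z_gamma i).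
have [A1 z1_A1] := hspan_coords u_span z1_cycle.
have [A2 z2_A2] := hspan_coords v_span z2_cycle.
pose R := row_mx A1 (- A2).
have R_sub : (R <= M)%MS.
  apply/row_subP => i; apply/M_ker; have [_ _ z12_bd] := z_gamma i.
  have z1_bd := is_bdS (subsetT _) (z1_A1 i).
  have z2_bd := is_bdS (subsetT _) (z2_A2 i).
  apply: is_bd_eq (is_bd_cat (is_bd_sub z12_bd z1_bd) z2_bd) => t.
  rewrite row_row_mx raddfN coef_combo_catf coef_cat !coef_sub !coef_combo_mx.
  rewrite mulNmx [X in _ + X]mxE; ring.
have R_free : row_free R.
  apply: inj_row_free => x; rewrite mul_mx_row mulmxN -row_mx0.
  move=> /eq_row_mx[xA1 /eqP]; rewrite oppr_eq0 => /eqP xA2.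
  have x1 : is_bd X1 (combo (x 0) z1).
    by apply/(is_bd_combo_rows x z1_A1); rewrite xA1; apply/is_bd_basis_combo.
  have x2 : is_bd X2 (combo (x 0) z2).
    by apply/(is_bd_combo_rows x z2_A2); rewrite xA2; apply/is_bd_basis_combo.
  by apply/rowP => i; rewrite mxE; apply: z_indep x1 x2 i.
by rewrite -(eqP R_free) mxrankS.
Qed.

Lemma dimGamma_rank : dimGamma F X1 X2 q = \rank M.
Proof.
apply: maxnatE => [|j [z1 [z2]]]; last exact: gamma_indep_le.
exact: gamma_indep_row_base.
Qed.

End Gamma.

Theorem mainTheorem2 (F : fieldType) (X : topologicalType) (X1 X2 : set X)
  (q : nat) :
  closure X1 `&` closure X2 = set0 ->
  finH F X1 q -> finH F X2 q -> finH F [set: X] q ->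
  bar_mult F (G1 X1 X2) 3 q 3 None =
    (dimH F [set: X] q)%:Z - (dimH F X1 q)%:Z - (dimH F X2 q)%:Z
    + (dimGamma F X1 X2 q)%:Z.
Proof.
move=> cl12 /dimH_basis[u [u_indep u_max]] /dimH_basis[v [v_indep v_max]].
move=> _.
have u_span := basis_hspan u_indep u_max.
have v_span := basis_hspan v_indep v_max.
have w_cycle := is_cycle_catf u_indep.1 v_indep.1.
have w_span := hspan_catf cl12 u_span v_span.
have [m [M M_ker]] := bd_combo_row_space [set: X] (catf u v).
rewrite /bar_mult /= -/(dimH F [set: X] q) (rk_ker_rank w_cycle w_span M_ker).
rewrite (dimGamma_rank u_indep v_indep u_span v_span M_ker).
have := rank_leq_col M; lia.
Qed.
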